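(* Let $X$ be a compact metric space, $f:X\to X$ continuous and $x\in X$. If $\omega_f(x)$ is totally periodic and totally disconnected, then $\omega_f(x)$ is finite.
   Context: $\omega_f(x)=\{y\in X:\ \exists\, n_i\to+\infty,\ f^{n_i}(x)\to y\}$. It is totally periodic if every point $y\in\omega_f(x)$ satisfies $f^m(y)=y$ for some $m\ge1$. *)

From HB Require Import structures.
From mathcomp Require Import all_boot all_order all_algebra.
From mathcomp Require Import all_classical all_reals all_analysis.
Set Implicit Arguments. Unset Strict Implicit. Unset Printing Implicit Defensive.
Import Order.TTheory GRing.Theory Num.Theory.
Local Open Scope classical_set_scope.

Definition omega_limit {X : topologicalType} (f : X -> X) (x : X) : set X :=
  [set y | exists n : nat -> nat,
      (forall N : nat, exists M : nat, forall i : nat, (M <= i)%N -> (N <= n i)%N)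
      /\ ((fun i => iter (n i) f x) @ \oo --> y)].

Definition totally_periodic {X : Type} (f : X -> X) (A : set X) : Prop :=
  forall y, A y -> exists m : nat, (1 <= m)%N /\ iter m f y = y.

From HB Require Import structures.
From mathcomp Require Import all_boot all_order all_algebra.
From mathcomp Require Import all_classical all_reals all_analysis.
Import Order.TTheory.
Local Open Scope classical_set_scope.

(* The omega-limit set [omega] of [x] is compact and cannot be split into
   two disjoint nonempty closed pieces one of which is forward invariant.  As
   [omega] is compact and totally disconnected, its relatively clopen subsets
   form a neighbourhood base, so a Baire-type argument applied to the closed
   sets [Fix (f^n)] covering [omega] gives a nonempty clopen [V] on which [f^N]
   is the identity.  The points of [omega] whose orbit meets [V] within [N]
   steps form a clopen invariant set, hence all of [omega], and periodicity
   then makes [f^N] the identity on [omega].  Running the same argument with a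
   clopen neighbourhood of any [z] avoiding the finite orbit of a fixed [y] in
   [omega] shows that [z] lies on that orbit. *)

Lemma periodic_fixed_iter {T : Type} (g : T -> T) (m N j : nat) (w : T) :
  (0 < m)%N -> iter m g w = w ->
  iter N g (iter j g w) = iter j g w -> iter N g w = w.
Proof.
move=> m_gt0 gmw gNj.
have gmkw k : iter (m * k) g w = w.
  by elim: k => [|k IHk]; rewrite ?muln0 // mulnS iterD IHk gmw.
have <- : iter (m * j - j) g (iter j g w) = w.
  by rewrite -iterD subnK ?gmkw // leq_pmull.
by rewrite -iterD addnC iterD gNj.
Qed.

Lemma continuous_iter {T : topologicalType} {g : T -> T} (n : nat) :
  continuous g -> continuous (iter n g).
Proof.
move=> cg; elim: n => [|n IHn] z; first exact: cvg_id.
exact: continuous_comp (IHn z) (cg _).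
Qed.

Lemma closed_fixed_points {T : topologicalType} {g : T -> T} :
  hausdorff_space T -> continuous g -> closed [set z | g z = z].
Proof.
rewrite open_hausdorff => hT cg z clz; apply: contrapT => /eqP /hT.
move=> [[U V] /= [/set_mem Ugz /set_mem Vz] [oU oV UV0]].
have nbhsUV : nbhs z (V `&` g @^-1` U).
  by apply: open_nbhs_nbhs; split; [apply: openI; [|apply: open_comp]|].
have [w [gw [Vw Ugw]]] := clz _ nbhsUV.
by move: UV0 Ugw; rewrite /= gw => /eqP/disjoints_subset/[apply].
Qed.

Lemma normal_separate_closed {T : topologicalType} {A B : set T} :
  normal_space T -> closed A -> closed B -> A `&` B = set0 ->
  exists U V : set T, [/\ open U, open V, A `<=` U, B `<=` V & U `&` V = set0].
Proof.
move=> nT clA clB AB0.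
have nbhsA : set_nbhs A (~` B).
  move=> a Aa; apply: open_nbhs_nbhs; split; first exact: closed_openC.
  by move=> Ba; rewrite -[False]/(set0 a) -AB0.
have [V AV clVB] := nT A clA (~` B) nbhsA.
exists V°, (~` closure V); split.
- exact: open_interior.
- exact/closed_openC/closed_closure.
- exact: AV.
- by move=> b Bb /clVB.
- apply/seteqP; split => // z [/interior_subset Vz]; apply.
  exact: subset_closure.
Qed.

Lemma compact_directed_bigcap_sub {T : topologicalType} {I : Type}
    (D : set I) (C : I -> set T) (O : set T) :
  compact [set: T] -> D !=set0 -> (forall i, D i -> closed (C i)) ->
  (forall i j, D i -> D j -> exists2 k, D k & C k `<=` C i `&` C j) ->
  open O -> \bigcap_(i in D) C i `<=` O -> exists2 i, D i & C i `<=` O.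
Proof.
move=> cT [i0 Di0] clC dirC oO CO; apply: contrapT => noCO.
pose F := filter_from D (fun i => C i `\` O).
have FF : Filter F.
  apply: filter_from_filter; first by exists i0.
  move=> i j Di Dj; have [k Dk Cij] := dirC i j Di Dj.
  by exists k => // z [/Cij [Ciz Cjz] nOz].
have PF : ProperFilter F.
  apply: filter_from_proper => i Di; apply/set0P/eqP => CO0.
  by apply: noCO; exists i => //; rewrite -setD_eq0 CO0.
have [p [_ clp]] := cT F PF filterT.
have FC i : D i -> F (C i `\` O) by exists i.
have Cp i : D i -> C i p.
  move=> Di; apply: clC => // B /(clp _ _ (FC i Di)) [z [[Ciz _] Bz]].
  by exists z.
have nOp : nbhs p O by apply: open_nbhs_nbhs; split => //; exact: CO.
by have [z [[_ nOz] Oz]] := clp _ _ (FC i0 Di0) nOp.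
Qed.

(* For closed [A], these are exactly the relatively clopen subsets of [A]. *)
Definition clopen_in {T : topologicalType} (A C : set T) :=
  [/\ C `<=` A, closed C & closed (A `\` C)].

Definition quasi_component {T : topologicalType} (A : set T) (y : T) :=
  \bigcap_(C in [set C | clopen_in A C /\ C y]) C.

Section ClopenIn.
Context {T : topologicalType} {A : set T}.

Lemma quasi_component_refl y : quasi_component A y y.
Proof. by move=> C []. Qed.

Lemma clopen_inI C D : clopen_in A C -> clopen_in A D -> clopen_in A (C `&` D).
Proof.
move=> [CA clC clAC] [DA clD clAD]; split.
- by move=> z [/CA].
- exact: closedI.
- by rewrite setDIr; exact: closedU.
Qed.

Lemma clopen_in_split C U V : open U -> open V -> U `&` V = set0 ->
  C `<=` U `|` V -> clopen_in A C -> clopen_in A (C `&` U).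
Proof.
move=> oU oV UV0 CUV [CA clC clAC].
have CU : C `&` U = C `&` ~` V.
  apply/seteqP; split => z [Cz Uz]; split => //.
    by move=> Vz; rewrite -[False]/(set0 z) -UV0.
  by have [|] := CUV z Cz.
split.
- by move=> z [/CA].
- by rewrite CU; apply: closedI => //; exact: open_closedC.
- have -> : A `\` (C `&` U) = (A `\` C) `|` (C `&` ~` U).
    apply/seteqP; split => z.
      move=> [Az nCUz]; have [Cz|] := pselect (C z); last by left.
      by right; split => // Uz; apply: nCUz.
    by case=> [[Az nCz]|[/CA Az nUz]]; split => // -[].
  by apply: closedU => //; apply: closedI => //; exact: open_closedC.
Qed.

Hypothesis clA : closed A.

Lemma clopen_in_id : clopen_in A A.
Proof. by split => //; rewrite setDv; exact: closed0. Qed.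

Lemma quasi_component_sub y : A y -> quasi_component A y `<=` A.
Proof. by move=> Ay z; apply; split => //; exact: clopen_in_id. Qed.

Lemma closed_quasi_component y : closed (quasi_component A y).
Proof. by apply: closed_bigI => C [[]]. Qed.

Hypothesis cT : compact [set: T].

Lemma quasi_component_sub_open {y : T} {O : set T} : A y -> open O ->
  quasi_component A y `<=` O -> exists C, [/\ clopen_in A C, C y & C `<=` O].
Proof.
move=> Ay oO QO.
have [|||C [clC Cy] CO] := @compact_directed_bigcap_sub _ _
  [set C | clopen_in A C /\ C y] id O cT _ _ _ oO QO; last by exists C.
- by exists A; split => //; exact: clopen_in_id.
- by move=> C [[]].
- move=> C D [clC Cy] [clD Dy].
  by exists (C `&` D) => //; split; [exact: clopen_inI|].
Qed.

Hypothesis hT : hausdorff_space T.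

Lemma connected_quasi_component y : A y -> connected (quasi_component A y).
Proof.
move=> Ay; apply/connectedP => E [E0 QE sepE].
wlog Ey : E E0 QE sepE / E false y.
  move=> wlogE; have := quasi_component_refl y; rewrite QE => -[|Ey].
    exact: wlogE.
  apply: (wlogE (E \o negb)) => /=; first by case.
  - by rewrite setUC.
  - by rewrite separatedC.
  - by [].
set Q := quasi_component A y in QE.
have clQ : closed Q by exact: closed_quasi_component.
have clE0 : closed (E false).
  move=> z clz; have : Q z.
    by apply: clQ; apply: closureS clz; rewrite QE; exact: subsetUl.
  by rewrite QE => -[//|Etz]; exfalso; rewrite -[False]/(set0 z) -sepE.1.
have clE1 : closed (E true).
  move=> z clz; have : Q z.
    by apply: clQ; apply: closureS clz; rewrite QE; exact: subsetUr.
  by rewrite QE => -[Efz|//]; exfalso; rewrite -[False]/(set0 z) -sepE.2.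
have [U0 [U1 [oU0 oU1 EU0 EU1 U01]]] := normal_separate_closed
  (compact_normal hT cT) clE0 clE1 (separated_disjoint sepE).
have [|C [clC Cy CU]] := quasi_component_sub_open Ay (openU oU0 oU1).
  by rewrite -/Q QE => z [/EU0|/EU1]; [left|right].
have QCU0 : Q `<=` C `&` U0.
  move=> z; apply; split; last by split => //; exact: EU0.
  exact: clopen_in_split oU0 oU1 U01 CU clC.
have [z Etz] := E0 true.
have [_ U0z] : (C `&` U0) z by apply: QCU0; rewrite QE; right.
by rewrite -[False]/(set0 z) -U01; split => //; exact: EU1.
Qed.

Lemma totally_disconnected_clopen_in_nbhs {y : T} {O : set T} :
  totally_disconnected A -> A y -> open O -> O y ->
  exists C, [/\ clopen_in A C, C y & C `<=` O].
Proof.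
move=> tdA Ay oO Oy; apply: quasi_component_sub_open => // z Qz.
have : connected_component A y z.
  exists (quasi_component A y) => //; split.
  - exact: quasi_component_refl.
  - exact: quasi_component_sub.
  - exact: connected_quasi_component.
by rewrite tdA // => ->.
Qed.

Lemma clopen_in_avoid {P V : set T} : totally_disconnected A -> closed P ->
  clopen_in A V -> ~ V `<=` P ->
  exists W, [/\ clopen_in A W, W !=set0, W `<=` V & W `<=` ~` P].
Proof.
move=> tdA clP [VA clV clAV] /existsNP [z /not_implyP [Vz nPz]].
have [||W [clW Wz WO]] := totally_disconnected_clopen_in_nbhs
    (O := ~` (A `\` V) `&` ~` P) tdA (VA z Vz).
- by apply: openI; apply: closed_openC.
- by split => // -[_]; apply.
exists W; split => //; first by exists z.
  move=> w Ww; have [nAVw _] := WO w Ww; apply: contrapT => nVw; apply: nAVw.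
  by split => //; have [WA _ _] := clW; exact: WA.
by move=> w /WO [].
Qed.

(* Otherwise we get nonempty clopen sets [K n], decreasing, with [K n.+1]
   disjoint from [P n]; by compactness they share a point, which lies in no
   [P n]. *)
Lemma totally_disconnected_baire (P : nat -> set T) :
  totally_disconnected A -> A !=set0 -> (forall n, closed (P n)) ->
  A `<=` \bigcup_n P n ->
  exists n V, [/\ clopen_in A V, V !=set0 & V `<=` P n].
Proof.
move=> tdA A0 clP AP; apply: contrapT => noV.
have /boolp.choice [g gP] : forall nV : nat * set T, exists W,
    clopen_in A nV.2 -> nV.2 !=set0 ->
    [/\ clopen_in A W, W !=set0, W `<=` nV.2 & W `<=` ~` P nV.1].
  move=> [n V] /=; have [[clV V0]|nV] := pselect (clopen_in A V /\ V !=set0).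
    have [|W WP] := clopen_in_avoid tdA (clP n) clV; last by exists W.
    by move=> VP; apply: noV; exists n, V.
  by exists V => clV V0; exfalso; exact: nV.
pose K := fix K n := if n is n'.+1 then g (n', K n') else A.
have KP n : clopen_in A (K n) /\ K n !=set0.
  elim: n => [|n [clK K0]]; first by split; [exact: clopen_in_id|].
  by have [] := gP (n, K n) clK K0.
have KS n : K n.+1 `<=` K n /\ K n.+1 `<=` ~` P n.
  by have [clK K0] := KP n; have [] := gP (n, K n) clK K0.
have Kmono : {homo K : i j / (i <= j)%N >-> j `<=` i}.
  apply: (@homo_leq _ K (fun U V => V `<=` U)) => [U|V U W VU WV|n].
  - exact: subset_refl.
  - exact: subset_trans WV VU.
  - exact: (KS n).1.
have [|||||n _ Kn0] := @compact_directed_bigcap_sub _ _ setT K set0 cT.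
- by exists 0%N.
- by move=> n _; have [[]] := KP n.
- move=> i j _ _; exists (maxn i j) => // z Kz.
  by split; apply: Kmono Kz; [exact: leq_maxl|exact: leq_maxr].
- exact: open0.
- move=> p Kp; have [n _ Pnp] := AP p (Kp 0%N I).
  exact: (KS n).2 p (Kp n.+1 I) Pnp.
by have [z /Kn0] := (KP n).2.
Qed.

End ClopenIn.

Section OmegaLimit.
Context {R : realType} {X : pseudoMetricType R} {f : X -> X} {x : X}.
Local Notation omega := (omega_limit f x).

Lemma omega_limit_frequently {y : X} {B : set X} (N : nat) :
  omega y -> nbhs y B -> exists2 n, (N <= n)%N & B (iter n f x).
Proof.
move=> [n [n_oo nx_y]] /nx_y [K _ nKB]; have [M nM] := n_oo N.
exists (n (maxn M K)); first by apply: nM; exact: leq_maxl.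
by apply: nKB; rewrite /= leq_maxr.
Qed.

Lemma omega_limit_cluster : omega = cluster ((fun n => iter n f x) @ \oo).
Proof.
apply/seteqP; split => [y Oy A B [N _ NA] By|y cly].
  have [n Nn Bn] := omega_limit_frequently N Oy By.
  by exists (iter n f x); split => //; exact: NA.
have /boolp.choice [n nP] k :
    exists n, (k <= n)%N /\ ball y k.+1%:R^-1 (iter n f x).
  have kA : ((fun n => iter n f x) @ \oo)
      [set iter n f x | n in [set n | (k <= n)%N]].
    by exists k => // n /= kn; exists n.
  have [_ [[n kn <-] yn]] :=
    cly _ _ kA (nbhsx_ballx y k.+1%:R^-1 (ltac:(by []))).
  by exists n.
exists n; split.
  by move=> N; exists N => i /leq_trans; apply; exact: (nP i).1.
apply/cvg_ballP => e e_gt0.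
have [K _ KP] := near_infty_natSinv_lt (PosNum e_gt0).
exists K => // i /= Ki; apply: le_ball (nP i).2; exact/ltW/KP.
Qed.

Lemma closed_omega_limit : closed omega.
Proof.
rewrite omega_limit_cluster clusterE.
by apply: closed_bigI => A _; exact: closed_closure.
Qed.

Hypothesis cf : continuous f.

Lemma omega_limit_invariant y : omega y -> omega (f y).
Proof.
move=> [n [n_oo nx_y]]; exists (fun i => (n i).+1); split.
  by move=> N; have [M nM] := n_oo N; exists M => i /nM /leqW.
exact: cvg_comp nx_y (cf y).
Qed.

Lemma omega_limit_iter k y : omega y -> omega (iter k f y).
Proof. by move=> Oy; elim: k => //= k; exact: omega_limit_invariant. Qed.

Hypothesis cX : compact [set: X].

Lemma omega_limit_eventually G : open G -> omega `<=` G ->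
  \forall n \near \oo, G (iter n f x).
Proof.
rewrite omega_limit_cluster clusterE => oG clG.
have [|||A FA clAG] := @compact_directed_bigcap_sub _ _
  ((fun n => iter n f x) @ \oo) closure G cX _ _ _ oG clG.
- by exists setT; exact: filterT.
- by move=> A _; exact: closed_closure.
- move=> A B FA FB; exists (A `&` B); first exact: filterI.
  exact: closureI.
by apply: filterS FA; apply: subset_trans clAG; exact: subset_closure.
Qed.

Hypothesis hX : hausdorff_space X.

Lemma omega_limit_invariant_clopen A : clopen_in omega A -> A !=set0 ->
  f @` A `<=` A -> omega `<=` A.
Proof.
move=> [Aom clA clOA] [a Aa] fA y Oy; apply: contrapT => nAy.
have [U [V [oU oV AU OAV UV0]]] :=
  normal_separate_closed (compact_normal hX cX) clA clOA (setDIK A omega).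
have UV z : U z -> V z -> False.
  by move=> Uz Vz; rewrite -[False]/(set0 z) -UV0.
pose U' := U `&` f @^-1` U.
have oU' : open U'.
  by apply: openI => //; apply: open_comp => // z _; exact: cf.
have [N _ NUV] : \forall n \near \oo, (U' `|` V) (iter n f x).
  apply: omega_limit_eventually; first exact: openU.
  move=> z Oz; have [Az|nAz] := pselect (A z); last by right; exact: OAV.
  by left; split; apply: AU => //; apply: fA; exists z.
have [n0 Nn0 U'n0] : exists2 n0, (N <= n0)%N & U' (iter n0 f x).
  apply: omega_limit_frequently (Aom a Aa) _.
  apply: open_nbhs_nbhs; split => //.
  by split; apply: AU => //; apply: fA; exists a.
(* After time [N] the orbit never leaves [U']: its next point is in [U], hence
   not in [V]. *)
have U'n k : U' (iter (k + n0) f x).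
  elim: k => // k [_ Ufk].
  have := NUV (k.+1 + n0)%N (leq_trans Nn0 (leq_addl _ _)).
  by rewrite addSn => -[//|Vk]; exfalso; exact: UV Ufk Vk.
have Vy : nbhs y V.
  by apply: open_nbhs_nbhs; split => //; exact: OAV.
have [n1 n01 Vn1] := omega_limit_frequently n0 Oy Vy.
by have [] := U'n (n1 - n0)%N; rewrite subnK // => /UV /(_ Vn1).
Qed.

Lemma omega_limit_enters {N : nat} {V : set X} :
  (0 < N)%N -> clopen_in omega V -> V !=set0 ->
  V `<=` [set z | iter N f z = z] ->
  omega `<=` [set w | exists2 j, (j < N)%N & V (iter j f w)].
Proof.
move=> N_gt0 [Vom clV clOV] [v Vv] VP.
pose W := omega `&` [set w | exists2 j, (j < N)%N & V (iter j f w)].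
suff : omega `<=` W by move=> + w Ow => /(_ w Ow) [].
apply: omega_limit_invariant_clopen.
- split; first by move=> ? [].
    have -> : W = \bigcup_(j in `I_N) (omega `&` iter j f @^-1` V).
      by apply/seteqP; split => [w [Ow [j jN Vj]]|w [j jN [Ow Vj]]];
        [exists j|split => //; exists j].
    apply: closed_bigcup => [|j _]; first exact: finite_II.
    apply: closedI; first exact: closed_omega_limit.
    by apply: preimage_closed => // z _; exact: continuous_iter.
  have -> : omega `\` W =
      \bigcap_(j in `I_N) (omega `&` iter j f @^-1` (omega `\` V)).
    apply/seteqP; split => [w [Ow nWw] j jN|w OVw].
      split=> //=; split => [|Vj]; first exact: omega_limit_iter.
      by apply: nWw; split => //; exists j.
    have [Ow _] := OVw 0%N N_gt0.
    by split => // -[_ [j /OVw [_ [_]]]].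
  apply: closed_bigI => j _; apply: closedI; first exact: closed_omega_limit.
  apply: preimage_closed => // z _; exact: continuous_iter.
- by exists v; split; [exact: Vom|exists 0%N].
- move=> _ [w [Ow [[|j] jN Vj]] <-]; split; try exact: omega_limit_invariant.
    by exists N.-1; rewrite ?ltn_predL // -iterSr prednK // VP.
  by exists j; [exact: ltnW|rewrite -iterSr].
Qed.

Lemma omega_limit_periodic {N : nat} {V : set X} :
  totally_periodic f omega -> (0 < N)%N ->
  clopen_in omega V -> V !=set0 -> V `<=` [set z | iter N f z = z] ->
  omega `<=` [set z | iter N f z = z].
Proof.
move=> tp N_gt0 clV V0 VP w Ow.
have [j _ Vj] := omega_limit_enters N_gt0 clV V0 VP _ Ow.
have [m [m_gt0 fmw]] := tp w Ow.
exact: periodic_fixed_iter m_gt0 fmw (VP _ Vj).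
Qed.

Lemma omega_limit_sub_orbit {N : nat} {y : X} :
  totally_disconnected omega -> (0 < N)%N ->
  omega `<=` [set z | iter N f z = z] -> omega y ->
  omega `<=` [set iter j f y | j in `I_N].
Proof.
move=> td N_gt0 omP Oy z Oz; apply: contrapT => nTz.
have clT : closed [set iter j f y | j in `I_N].
  apply: (accessible_finite_set_closed.1 (hausdorff_accessible hX)).
  exact/finite_image/finite_II.
have [V [clV Vz VT]] := totally_disconnected_clopen_in_nbhs closed_omega_limit
  cX hX td Oz (closed_openC clT) nTz.
have VP : V `<=` [set z | iter N f z = z].
  by case: clV => Vom _ _ w /Vom /omP.
have [j jN Vj] := omega_limit_enters N_gt0 clV (ex_intro _ z Vz) VP _ Oy.
by apply: (VT _ Vj); exists j.
Qed.

End OmegaLimit.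

Theorem lemma2p5 (R : realType) (X : pseudoMetricType R)
  (hX : hausdorff_space X) (cX : compact [set: X])
  (f : X -> X) (cf : continuous f) (x : X) :
  totally_periodic f (omega_limit f x) ->
  totally_disconnected (omega_limit f x) ->
  finite_set (omega_limit f x).
Proof.
move=> tp td.
have [->|/set0P [y Oy]] := eqVneq (omega_limit f x) set0.
  exact: finite_set0.
have [|n [V [clV V0 VP]]] :=
  totally_disconnected_baire closed_omega_limit cX hX
    (fun n => [set z | iter n.+1 f z = z]) td (ex_intro _ y Oy)
    (fun n => closed_fixed_points hX (continuous_iter n.+1 cf)).
  by move=> z /tp [[|m] [//]]; exists m.
have omP := omega_limit_periodic cf cX hX tp (ltn0Sn n) clV V0 VP.
have omT := omega_limit_sub_orbit cf cX hX td (ltn0Sn n) omP Oy.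
exact/(sub_finite_set omT)/finite_image/finite_II.
Qed.
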